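(* Let $\mu$ be a density on $[q]^n$ with $H_\infty(\mu)\ge(n-t)\log q$. Then there exists a partition $[q]^n=\left(\bigcup_{i\in[N]}S_i\right)\cup S_{error}$ such that for each $i\in[N]$, the density $\mu$ conditioned on $S_i$ is a $10t$-CBD distribution, and $\mu(S_{error})\le q^{-t}$.
   Context: Logarithms base 2. A density on $[q]^n$ is $\mu\ge0$ with uniform average $1$; $X\sim\mu$ means $\Pr[X=x]=\mu(x)q^{-n}$; $H_\infty(\mu)=\min_x\log(q^n/\mu(x))$; for a random variable $Z$, $H_\infty(Z)=\min_z\log(1/\Pr[Z=z])$. $\mu(S)=\Pr_{X\sim\mu}[X\in S]$, and $\mu$ conditioned on $S$ is the distribution of $X\sim\mu$ conditioned on $X\in S$. $X_I$ is the projection onto coordinates $I\subseteq[n]$. A random variable $X$ on $[q]^n$ is $d$-CBD if there is $I\subseteq[n]$, $|I|\le d$, with $X_I$ constant and $H_\infty(X_J)\ge0.8\log q\cdot|J|$ for every $J\subseteq[n]\setminus I$. *)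

From HB Require Import structures.
From mathcomp Require Import all_boot all_order all_algebra.
From mathcomp Require Import reals exp.
Set Implicit Arguments. Unset Strict Implicit. Unset Printing Implicit Defensive.
Import Order.TTheory GRing.Theory Num.Theory.
Local Open Scope ring_scope.

Definition cube (n q : nat) := {ffun 'I_n -> 'I_q}.

Section Defs.
Context {R : realType} {n q : nat}.

Definition log2 (x : R) : R := ln x / ln 2.

(* mu is a density: nonnegative, uniform average 1 *)
Definition is_density (mu : cube n q -> R) : Prop :=
  (forall x, 0 <= mu x) /\ \sum_(x : cube n q) mu x = (q ^ n)%:R.

(* H_oo(mu) >= h, where H_oo(mu) = min_x log(q^n / mu(x))
   (points with mu(x) = 0 contribute +oo to the minimum) *)
Definition Hinf_density_ge (mu : cube n q -> R) (h : R) : Prop :=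
  forall x, 0 < mu x -> h <= log2 ((q ^ n)%:R / mu x).

(* mu(S) = Pr_{X ~ mu}[X \in S] *)
Definition dmass (mu : cube n q -> R) (S : {set cube n q}) : R :=
  \sum_(x in S) mu x / (q ^ n)%:R.

Definition cond (mu : cube n q -> R) (S : {set cube n q}) : cube n q -> R :=
  fun x => if x \in S then mu x / (\sum_(y in S) mu y) else 0.

Definition proj_prob (p : cube n q -> R) (J : {set 'I_n}) (y : cube n q) : R :=
  \sum_(x : cube n q | [forall j in J, x j == y j]) p x.

(* H_oo(X_J) >= h, where H_oo(Z) = min_z log(1/Pr[Z = z]) over values z
   with positive probability *)
Definition Hinf_proj_ge (p : cube n q -> R) (J : {set 'I_n}) (h : R) : Prop :=
  forall y, 0 < proj_prob p J y -> h <= log2 (1 / proj_prob p J y).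

Definition CBD (p : cube n q -> R) (d : R) : Prop :=
  exists I : {set 'I_n},
    (#|I|%:R <= d) /\
    (exists c : cube n q, forall x, 0 < p x -> forall i, i \in I -> x i = c i) /\
    (forall J : {set 'I_n}, [disjoint J & I] ->
       Hinf_proj_ge p J ((4 / 5) * log2 q%:R * #|J|%:R)).

End Defs.

From HB Require Import structures.
From mathcomp Require Import all_boot all_order all_algebra.
From mathcomp Require Import reals exp.
From mathcomp Require Import lra zify.
Set Implicit Arguments. Unset Strict Implicit. Unset Printing Implicit Defensive.
Import Order.TTheory GRing.Theory Num.Theory.
Local Open Scope ring_scope.

(* Every point has mass mu x <= q^t.  Inside a set T of mass more than q^-t,
   pick a restriction x_I = al of maximal size |I| among those keeping at least
   a q^(-4|I|/5) fraction of the weight of T, and let S be T restricted to it.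
   By maximality no further restriction x_J = y with J disjoint from I keeps
   more than a q^(-4|J|/5) fraction of S, which is the min-entropy condition;
   comparing the weight of S with q^(n-|I|) points of mass <= q^t gives
   |I| < 10t.  Peeling such pieces off greedily until the remaining mass is at
   most q^-t yields the partition. *)

Section GreedyPartition.
Variables (T : finType) (good : {set T} -> Prop) (small : pred {set T}).
Hypothesis good_subset : forall A, ~~ small A ->
  exists S : {set T}, [/\ S \subset A, S != set0 & good S].

Lemma greedy_partition (A : {set T}) :
  exists (N : nat) (S : 'I_N -> {set T}) (Serr : {set T}),
    [/\ (forall i j : 'I_N, i != j -> [disjoint S i & S j]),
        (forall i : 'I_N, [disjoint S i & Serr]),
        (\bigcup_(i < N) S i) :|: Serr = A,
        (forall i : 'I_N, good (S i))
      & small Serr].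
Proof.
have [k] := ubnP #|A|; elim: k => // k IH in A *; rewrite ltnS => leAk.
have [smallA | /good_subset[S0 [S0A S0n goodS0]]] := boolP (small A).
  exists 0%N, (fun=> set0), A.
  by split=> //; [case | case | rewrite big_ord0 set0U | case].
have ltA : (#|A :\: S0| < k)%N.
  apply: leq_trans leAk; rewrite cardsD (setIidPr S0A).
  have := subset_leq_card S0A; have : (0 < #|S0|)%N by rewrite card_gt0.
  lia.
have [N [S [Serr [disjS disjSerr coverA goodS smallSerr]]]] := IH _ ltA.
have disjS0 (B : {set T}) : B \subset A :\: S0 -> [disjoint B & S0].
  by rewrite subsetD => /andP[].
have SA j : S j \subset A :\: S0.
  by rewrite -coverA; apply: subset_trans (bigcup_sup j isT) (subsetUl _ _).
have SerrA : Serr \subset A :\: S0 by rewrite -coverA subsetUr.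
exists N.+1, (fun i => if unlift ord0 i is Some j then S j else S0), Serr.
split=> [i j | i | | i |] //.
- case: (unliftP ord0 i) => [i' ->|->]; case: (unliftP ord0 j) => [j' ->|->] //.
  + by move=> neq; apply: disjS; apply: contraNneq neq => ->.
  + by move=> _; apply: disjS0.
  + by move=> _; rewrite disjoint_sym; apply: disjS0.
- case: (unliftP ord0 i) => [i' _|_]; first exact: disjSerr.
  by rewrite disjoint_sym; apply: disjS0.
- rewrite big_ord_recl unlift_none.
  under eq_bigr => i _ do rewrite liftK.
  by rewrite -setUA coverA setDE setUIr setUCr setIT (setUidPr S0A).
- by case: (unliftP ord0 i) => [i' _|_]; [exact: goodS | exact: goodS0].
Qed.

End GreedyPartition.

Section Subcube.
Variables n q : nat.

Definition subcube (I : {set 'I_n}) (al : cube n q) : {set cube n q} :=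
  [set x : cube n q | [forall i in I, x i == al i]].

Lemma subcube0 al : subcube set0 al = [set: cube n q].
Proof. by apply/setP => x; rewrite !inE; apply/forallP => i; rewrite inE. Qed.

Lemma subcube_const I al (x : cube n q) i :
  x \in subcube I al -> i \in I -> x i = al i.
Proof. by rewrite inE => /forallP/(_ i)/implyP hi /hi/eqP. Qed.

Lemma card_subcube I (al : cube n q) :
  (0 < q)%N -> (#|subcube I al| <= q ^ (n - #|I|))%N.
Proof.
move=> q_gt0; pose c0 : 'I_q := Ordinal q_gt0.
pose forget (x : cube n q) : cube n q := [ffun i => if i \in I then c0 else x i].
have forget_inj : {in subcube I al &, injective forget}.
  move=> x y xI yI /ffunP eq_xy; apply/ffunP => i; have := eq_xy i; rewrite !ffunE.
  by case: ifP => // iI _; rewrite (subcube_const xI iI) (subcube_const yI iI).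
rewrite -(card_in_imset forget_inj).
apply: leq_trans (_ : #|pffun_on c0 (~: I) predT| <= _)%N.
  apply/subset_leq_card/subsetP => _ /imsetP[x _ ->]; apply/pffun_onP; split=> //.
  by apply/subsetP => i; rewrite !inE ffunE; case: (i \in I); rewrite ?eqxx.
by rewrite card_pffun_on card_ord [#|~: I|]cardsCs setCK card_ord.
Qed.

Lemma subcubeIU (I J : {set 'I_n}) (al be : cube n q) : [disjoint J & I] ->
  subcube I al :&: subcube J be =
  subcube (I :|: J) [ffun i => if i \in I then al i else be i].
Proof.
move=> dJI; apply/setP => x; rewrite !inE.
apply/andP/forallP => [[/forallP xI /forallP xJ] i | xIJ].
  rewrite inE ffunE; case: (boolP (i \in I)) => iI /=.
    by have := xI i; rewrite iI.
  by apply/implyP => iJ; have := xJ i; rewrite iJ.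
split; apply/forallP => i; apply/implyP => hi; have := xIJ i.
  by rewrite !inE ffunE hi.
by rewrite !inE ffunE hi orbT (disjointFr dJI hi).
Qed.

End Subcube.

Section Weight.
Variables (R : realType) (n q : nat) (mu : cube n q -> R).
Hypothesis mu_ge0 : forall x, 0 <= mu x.

Definition weight (S : {set cube n q}) : R := \sum_(x in S) mu x.

Lemma le_weight (A B : {set cube n q}) : A \subset B -> weight A <= weight B.
Proof.
move=> AB; rewrite /weight [leRHS](big_setID A) /= (setIidPr AB) lerDl.
exact: sumr_ge0.
Qed.

Lemma dmassE S : dmass mu S = weight S / (q ^ n)%:R.
Proof. by rewrite /dmass /weight mulr_suml. Qed.

Lemma proj_prob_cond S J y :
  proj_prob (cond mu S) J y = weight (S :&: subcube J y) / weight S.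
Proof.
rewrite /proj_prob /cond /weight -big_mkcondr mulr_suml; apply: eq_bigl => x.
by rewrite inE andbC inE.
Qed.

End Weight.

Section Log2.
Variable R : realType.

Lemma ltr_powR (a x y : R) : 1 < a -> (a `^ x < a `^ y) = (x < y).
Proof.
move=> a_gt1; have a_gt0 : 0 < a by apply: lt_trans a_gt1.
rewrite -(ltr_ln (powR_gt0 x a_gt0) (powR_gt0 y a_gt0)) !ln_powR.
by rewrite ltr_pM2r // ln_gt0.
Qed.

Lemma log2_powR (a x : R) : log2 (a `^ x) = x * log2 a.
Proof. by rewrite /log2 ln_powR mulrA. Qed.

Lemma ler_log2 (x y : R) : 0 < x -> 0 < y -> (log2 x <= log2 y) = (x <= y).
Proof.
move=> x_gt0 y_gt0; rewrite ler_pM2r ?ler_ln ?posrE // invr_gt0.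
by apply: ln_gt0; rewrite ltr1n.
Qed.

End Log2.

Lemma Hinf_proj_ge_powR (R : realType) n q (p : cube n q -> R) J (a c : R) : 0 < a ->
  (forall y, proj_prob p J y <= a `^ (- c)) -> Hinf_proj_ge p J (c * log2 a).
Proof.
move=> a_gt0 p_le y p_gt0; rewrite -log2_powR ler_log2 ?powR_gt0 ?divr_gt0 //.
by rewrite ler_pdivlMr // mulrC -ler_pdivlMr ?powR_gt0 // div1r -powRN.
Qed.

Lemma le_powR_of_Hinf_density (R : realType) n q (mu : cube n q -> R) t : (0 < q)%N ->
  Hinf_density_ge mu ((n%:R - t) * log2 q%:R) -> forall x, mu x <= q%:R `^ t.
Proof.
move=> q_gt0 mu_Hinf x; have [mu_gt0 | mu_le0] := ltP 0 (mu x); last first.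
  exact: le_trans mu_le0 (powR_ge0 _ _).
have qR_gt0 : 0 < q%:R :> R by rewrite ltr0n.
have qn_gt0 : 0 < (q ^ n)%:R :> R by rewrite ltr0n expn_gt0 q_gt0.
have := mu_Hinf x mu_gt0; rewrite -log2_powR ler_log2 ?powR_gt0 ?divr_gt0 //.
rewrite ler_pdivlMr // => qnt_le.
have qnE : (q ^ n)%:R = q%:R `^ (n%:R - t) * q%:R `^ t :> R.
  by rewrite -powRD ?(gt_eqF qR_gt0) ?implybT // subrK powR_mulrn ?natrX // ltW.
by rewrite -(ler_pM2l (powR_gt0 (n%:R - t) qR_gt0)) -qnE.
Qed.

Section CBDPiece.
Variables (R : realType) (n q : nat) (t : R) (mu : cube n q -> R).
Hypotheses (q_gt1 : (1 < q)%N) (mu_ge0 : forall x, 0 <= mu x).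
Hypothesis mu_le : forall x, mu x <= q%:R `^ t.

Local Notation a := (q%:R : R).
Local Notation weight := (weight mu).

Let a_gt1 : 1 < a. Proof. by rewrite ltr1n. Qed.
Let a_gt0 : 0 < a. Proof. exact: lt_trans a_gt1. Qed.
Let qn_gt0 : 0 < (q ^ n)%:R :> R.
Proof. by rewrite ltr0n expn_gt0 ltnW. Qed.

Let powRDa x y : a `^ (x + y) = a `^ x * a `^ y.
Proof. by rewrite powRD // (gt_eqF a_gt0) implybT. Qed.

Lemma weight_subcube_le T I al :
  weight (T :&: subcube I al) <= a `^ (n%:R - #|I|%:R + t).
Proof.
apply: le_trans (le_weight mu_ge0 (subsetIr T _)) _.
apply: le_trans (_ : \sum_(x in subcube I al) a `^ t <= _).
  by apply: ler_sum => x _; apply: mu_le.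
rewrite sumr_const -[_ *+ _]mulr_natl powRDa ler_wpM2r ?powR_ge0 //.
rewrite -natrB; last by apply: leq_trans (max_card _) _; rewrite card_ord.
by rewrite powR_mulrn ?(ltW a_gt0) // -natrX ler_nat card_subcube // ltnW.
Qed.

Definition dense (T : {set cube n q}) (I : {set 'I_n}) (al : cube n q) :=
  a `^ (- (4 / 5) * #|I|%:R) * weight T <= weight (T :&: subcube I al).

Lemma dense_card T I al : a `^ (- t) < dmass mu T -> dense T I al ->
  #|I|%:R < 10 * t.
Proof.
(* q^(-4|I|/5) q^(n-t) < weight S <= q^(n-|I|+t), hence |I|/5 < 2t. *)
rewrite dmassE ltr_pdivlMr // => T_heavy T_dense.
have : a `^ (- (4 / 5) * #|I|%:R) * (a `^ (- t) * (q ^ n)%:R) <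
       a `^ (n%:R - #|I|%:R + t).
  rewrite -(ltr_pM2l (powR_gt0 (- (4 / 5) * #|I|%:R) a_gt0)) in T_heavy.
  exact: lt_le_trans T_heavy (le_trans T_dense (weight_subcube_le _ _ _)).
by rewrite natrX -powR_mulrn ?(ltW a_gt0) // -!powRDa ltr_powR //; lra.
Qed.

Lemma maximal_dense_spread T I al (J : {set 'I_n}) (y : cube n q) :
  dense T I al ->
  (forall I' al', dense T I' al' -> (#|I'| <= #|I|)%N) -> [disjoint J & I] ->
  weight (T :&: subcube I al :&: subcube J y) <=
  a `^ (- (4 / 5) * #|J|%:R) * weight (T :&: subcube I al).
Proof.
move=> I_dense I_max dJI.
have [-> | J_n0] := eqVneq J set0.
  by rewrite cards0 mulr0 powRr0 mul1r subcube0 setIT.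
have card_IJ : #|I :|: J| = (#|I| + #|J|)%N.
  by rewrite cardsU disjoint_setI0 1?disjoint_sym // cards0 subn0.
have /negP IJ_sparse :
    ~ dense T (I :|: J) [ffun i => if i \in I then al i else y i].
  move=> /I_max; rewrite card_IJ -[leqRHS]addn0 leq_add2l leqn0 cards_eq0.
  exact/negP.
rewrite /dense -ltNge in IJ_sparse.
rewrite -setIA subcubeIU //; apply/ltW/(lt_le_trans IJ_sparse).
by rewrite card_IJ natrD mulrDr powRDa mulrAC mulrC ler_wpM2l ?powR_ge0.
Qed.

Lemma CBD_piece T : a `^ (- t) < dmass mu T ->
  exists S : {set cube n q},
    [/\ S \subset T, S != set0 & 0 < dmass mu S /\ CBD (cond mu S) (10 * t)].
Proof.
move=> T_heavy; pose al0 : cube n q := [ffun=> Ordinal (ltnW q_gt1)].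
have dense0 : dense T set0 al0.
  by rewrite /dense cards0 mulr0 powRr0 mul1r subcube0 setIT.
have [[I al] /= I_dense I_max] :=
  @arg_maxnP _ (set0, al0) (fun p => dense T p.1 p.2) (fun p => #|p.1|) dense0.
set S := T :&: subcube I al.
have T_pos : 0 < weight T.
  have := le_lt_trans (powR_ge0 _ _) T_heavy.
  by rewrite dmassE pmulr_lgt0 // invr_gt0.
have S_pos : 0 < weight S :=
  lt_le_trans (mulr_gt0 (powR_gt0 _ a_gt0) T_pos) I_dense.
exists S; split; first exact: subsetIl.
  by apply: contraTneq S_pos => ->; rewrite /weight big_set0 ltxx.
split; first by rewrite dmassE divr_gt0.
exists I; split; [exact/ltW/(dense_card T_heavy I_dense) | split].
  exists al => x; rewrite /cond; case: ifP => [S_x _ i | _]; last by rewrite ltxx.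
  by move: S_x; rewrite inE => /andP[_ /subcube_const]; apply.
move=> J dJI; rewrite mulrAC; apply: Hinf_proj_ge_powR => // y.
rewrite proj_prob_cond ler_pdivrMr // -mulNr.
by apply: maximal_dense_spread => // I' al' /(I_max (I', al')).
Qed.

End CBDPiece.

Theorem lemma6p1 (R : realType) (n q : nat) (t : R) (mu : cube n q -> R) :
  (1 < q)%N ->
  is_density mu ->
  Hinf_density_ge mu ((n%:R - t) * log2 q%:R) ->
  exists (N : nat) (S : 'I_N -> {set cube n q}) (Serr : {set cube n q}),
    [/\ (forall i j : 'I_N, i != j -> [disjoint S i & S j]),
        (forall i : 'I_N, [disjoint S i & Serr]),
        (\bigcup_(i < N) S i) :|: Serr = [set: cube n q],
        (forall i : 'I_N, 0 < dmass mu (S i) /\ CBD (cond mu (S i)) (10 * t))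
      & dmass mu Serr <= q%:R `^ (- t)].
Proof.
move=> q_gt1 [mu_ge0 _] mu_Hinf.
have mu_le := le_powR_of_Hinf_density (ltnW q_gt1) mu_Hinf.
apply: (greedy_partition (good := fun S => 0 < dmass mu S /\ CBD (cond mu S) (10 * t)))
  => A; rewrite -ltNge; exact: CBD_piece.
Qed.
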